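(* In the setting of the following: an affine control system $\dot{\boldsymbol{x}}=f(\boldsymbol{x})+g(\boldsymbol{x})\boldsymbol{u}$ ($f,g$ locally Lipschitz) with finite control limits $\boldsymbol{u}_{\min}\le\boldsymbol{u}\le\boldsymbol{u}_{\max}$, a HOCBF $b(\boldsymbol{x})$ of relative degree $m$ encoding the safety requirement $b(\boldsymbol{x})\ge0$, and the input replaced by a filtered input $\boldsymbol{u}_f\in\mathbb{R}^q$ generated by the first-order low-pass filter $\dot{\boldsymbol{u}}_f=\frac{1}{\tau}(\boldsymbol{\nu}-\boldsymbol{u}_f)$ with $\tau>0$ (so the FCBF $b_f(\boldsymbol{x},\boldsymbol{u}_f)=\psi_m(\boldsymbol{x},\boldsymbol{u}_f)$ and the HOCBFs $b_k^{\min}=u_{k,f}-u_{k,\min}$, $b_k^{\max}=u_{k,\max}-u_{k,f}$ have relative degree $m_a=1$ with respect to the filter): suppose (1) a Lipschitz controller $\boldsymbol{\nu}$ satisfies $\psi_{1,f}\ge0$ for all $t\ge0$ with $(\boldsymbol{x}(0),\boldsymbol{u}_f(0))\in\mathcal{C}_0\cap\dots\cap\mathcal{C}_{m-1}\cap\mathcal{C}_{0,f}$; (2) for each $k$, $b_k^{\min},b_k^{\max}$ are HOCBFs of relative degree 1 for the filter, with $b_k^{\min}(\boldsymbol{u}_f(0))\ge0$, $b_k^{\max}(\boldsymbol{u}_f(0))\ge0$ and $\psi^{\min}_{k,1}\ge0$, $\psi^{\max}_{k,1}\ge0$ satisfied by a Lipschitz $\boldsymbol{\nu}$; (3) these FCBF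 and HOCBF conditions are jointly feasible with a common solution $\boldsymbol{\nu}$ at each time $t$, which is applied. Then $\boldsymbol{u}_f$ is Lipschitz continuous, $b(\boldsymbol{x}(t))\ge0$, and $\boldsymbol{u}_{\min}\le\boldsymbol{u}_f(t)\le\boldsymbol{u}_{\max}$ for all $t\ge0$.
   Context: A class $\kappa$ function is a continuous, strictly increasing $\alpha:[0,a)\to[0,\infty]$, $a>0$, $\alpha(0)=0$. HOCBF of $b$ with relative degree $m$ for the original system: $\psi_0=b$, $\psi_i=\dot\psi_{i-1}+\alpha_i(\psi_{i-1})$ ($i=1,\dots,m$, $\alpha_i$ an $(m-i)$-times differentiable class $\kappa$ function, derivatives along the dynamics), $\mathcal{C}_i=\{\boldsymbol{x}:\psi_i(\boldsymbol{x})\ge0\}$ for $i<m$, and $\sup_{\boldsymbol{u}\in\mathcal{U}}\psi_m(\boldsymbol{x},\boldsymbol{u})\ge0$ on $\bigcap_{i<m}\mathcal{C}_i$ (coefficient of $\boldsymbol{u}$ times $\boldsymbol{u}$ nonzero on the boundary). With the filter of relative degree one: $\psi_{0,f}(\boldsymbol{x},\boldsymbol{u}_f)=\psi_m(\boldsymbol{x},\boldsymbol{u}_f)$, $\mathcal{C}_{0,f}=\{\psi_{0,f}\ge0\}$, $\psi_{1,f}=\dot\psi_{0,f}+\alpha(\psi_{0,f})$ with $\alpha$ class $\kappa$ and the derivative along $\dot{\boldsymbol{x}}=f+g\boldsymbol{u}_f$, $\dot{\boldsymbol{u}}_f=\frac1\tau(\boldsymbol{\nu}-\boldsymbol{u}_f)$;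 the FCBF condition is $\sup_{\boldsymbol{\nu}}\psi_{1,f}\ge0$ on $\mathcal{C}_{0,f}$. Similarly $\psi^{\min}_{k,1}=\dot b_k^{\min}+\alpha^{\min}_{k,1}(b_k^{\min})$, $\psi^{\max}_{k,1}=\dot b_k^{\max}+\alpha^{\max}_{k,1}(b_k^{\max})$ with class $\kappa$ functions $\alpha^{\min}_{k,1},\alpha^{\max}_{k,1}$; $u_{k,f},u_{k,\min},u_{k,\max}$ are $k$-th components. *)

From HB Require Import structures.
From mathcomp Require Import all_boot all_order all_algebra.
From mathcomp Require Import all_classical all_reals all_analysis.
Set Implicit Arguments. Unset Strict Implicit. Unset Printing Implicit Defensive.
Import Order.TTheory GRing.Theory Num.Theory.
Import numFieldNormedType.Exports.
Local Open Scope classical_set_scope.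
Local Open Scope ring_scope.

Definition classK (R : realType) (a : R -> R) : Prop :=
  a 0 = 0 /\ continuous a /\ {homo a : x y / x < y}.

Definition loc_lipschitz (R : realType) (V W : normedModType R) (h : V -> W) : Prop :=
  forall x0 : V, exists2 r : R, 0 < r & exists L : R, forall x y : V,
    ball x0 r x -> ball x0 r y -> `|h x - h y| <= L * `|x - y|.

Definition in_box (R : realType) (q : nat) (umin umax u : 'cV[R]_q) : Prop :=
  forall k : 'I_q, umin k ord0 <= u k ord0 <= umax k ord0.

Fixpoint psi (R : realType) (n q : nat) (f : 'cV[R]_n -> 'cV[R]_n)
  (g : 'cV[R]_n -> 'M[R]_(n, q)) (b : 'cV[R]_n -> R) (alpha : nat -> R -> R)
  (i : nat) (x : 'cV[R]_n) (u : 'cV[R]_q) : R :=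
  match i with
  | 0 => b x
  | i'.+1 => 'D_(f x + g x *m u) (fun y => psi f g b alpha i' y u) x
             + alpha i'.+1 (psi f g b alpha i' x u)
  end.

Definition rel_degree (R : realType) (n q : nat) f g (b : 'cV[R]_n -> R) alpha
  (m : nat) : Prop :=
  (forall i, (i < m)%N -> forall (x : 'cV[R]_n) (u u' : 'cV[R]_q),
      psi f g b alpha i x u = psi f g b alpha i x u') /\
  (exists (x : 'cV[R]_n) (u u' : 'cV[R]_q),
      psi f g b alpha m x u <> psi f g b alpha m x u').

(* C_i = {x | psi_i(x) >= 0}, i < m (psi_i independent of the input) *)
Definition Cset (R : realType) (n q : nat) f g (b : 'cV[R]_n -> R) alpha
  (i : nat) : set 'cV[R]_n :=
  [set x | 0 <= psi f g b alpha i x (0 : 'cV[R]_q)].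

Definition is_HOCBF (R : realType) (n q : nat) f g (b : 'cV[R]_n -> R) alpha
  (m : nat) (umin umax : 'cV[R]_q) : Prop :=
  (forall i, (0 < i <= m)%N -> classK (alpha i)) /\
  forall x : 'cV[R]_n, (forall i, (i < m)%N -> Cset f g b alpha i x) ->
    (0 <= ereal_sup [set (psi f g b alpha m x u)%:E | u in in_box umin umax])%E.

Definition filt_field (R : realType) (n q : nat) (f : 'cV[R]_n -> 'cV[R]_n)
  (g : 'cV[R]_n -> 'M[R]_(n, q)) (tau : R) (z : 'cV[R]_n * 'cV[R]_q)
  (nu : 'cV[R]_q) : 'cV[R]_n * 'cV[R]_q :=
  (f z.1 + g z.1 *m z.2, tau^-1 *: (nu - z.2)).

Definition psi1f (R : realType) (n q : nat) f g (tau : R)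
  (h : 'cV[R]_n * 'cV[R]_q -> R) (a : R -> R) (z : 'cV[R]_n * 'cV[R]_q)
  (nu : 'cV[R]_q) : R :=
  'D_(filt_field f g tau z nu) h z + a (h z).

Definition is_CBF_filt (R : realType) (n q : nat) f g (tau : R)
  (h : 'cV[R]_n * 'cV[R]_q -> R) (a : R -> R) : Prop :=
  classK a /\
  forall z : 'cV[R]_n * 'cV[R]_q, 0 <= h z ->
    (0 <= ereal_sup (range (fun nu : 'cV[R]_q => (psi1f f g tau h a z nu)%:E)))%E.

Definition bf (R : realType) (n q : nat) f g (b : 'cV[R]_n -> R) alpha (m : nat)
  (z : 'cV[R]_n * 'cV[R]_q) : R := psi f g b alpha m z.1 z.2.

Definition bmin (R : realType) (n q : nat) (umin : 'cV[R]_q) (k : 'I_q)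
  (z : 'cV[R]_n * 'cV[R]_q) : R := z.2 k ord0 - umin k ord0.
Definition bmax (R : realType) (n q : nat) (umax : 'cV[R]_q) (k : 'I_q)
  (z : 'cV[R]_n * 'cV[R]_q) : R := umax k ord0 - z.2 k ord0.

From HB Require Import structures.
From mathcomp Require Import all_boot all_order all_algebra.
From mathcomp Require Import all_classical all_reals all_analysis.
From mathcomp Require Import lra zify.
Import Order.TTheory GRing.Theory Num.Theory.
Import numFieldNormedType.Exports.
Local Open Scope classical_set_scope.
Local Open Scope ring_scope.

(* Every barrier condition has the form  h' + a(h) >= 0  along the closed-loop
   trajectory, with a class-K function a and h(0) >= 0, and then h stays
   nonnegative: past the last time h was nonnegative before a negative value,
   h < 0 forces h' >= -a(h) > 0, so h cannot have decreased.  For b_f = psi_m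
   this gives psi_m >= 0; since psi_0, ..., psi_(m-1) do not depend on the
   input, psi_(i+1) = psi_i' + alpha_(i+1)(psi_i) along the trajectory, which
   carries nonnegativity down to psi_0 = b.  For b_k^min and b_k^max it keeps
   u_f in the box.  The derivatives of these two barriers are the rate of
   u_(k,f) and its opposite, so their two conditions bound that rate by
   alpha_k^min(B) + alpha_k^max(B) with B = u_(k,max) - u_(k,min); the mean
   value theorem then makes u_f Lipschitz. *)

Section calculus.
Context {R : realType}.

Lemma within_continuous_comp (U V W : topologicalType) (A : set U) (c : U -> V)
    (H : V -> W) :
  {within A, continuous c} -> continuous H -> {within A, continuous (H \o c)}.
Proof.
move=> cc Hc s.
by apply: (@continuous_comp (subspace A) V W c H); [exact: cc | exact: Hc].
Qed.

Lemma within_continuous_pair (U V W : topologicalType) (A : set U) (c : U -> V)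
    (e : U -> W) :
  {within A, continuous c} -> {within A, continuous e} ->
  {within A, continuous (fun s => (c s, e s))}.
Proof. by move=> cc ce s; apply: cvg_pair; [exact: cc | exact: ce]. Qed.

Lemma is_derive_pair (V W : normedModType R) (c : R -> V) (e : R -> W)
    (t : R) (dc : V) (de : W) :
  is_derive t 1 c dc -> is_derive t 1 e de ->
  is_derive t 1 (fun s => (c s, e s)) (dc, de).
Proof.
move=> [/derivable1_diffP cd <-] [/derivable1_diffP ed <-].
have pd : differentiable (fun s => (c s, e s)) t by apply: differentiable_pair.
apply: DeriveDef; first exact: diff_derivable.
by rewrite !deriveE // diff_pair.
Qed.

Lemma is_derive_comp (V W : normedModType R) (c : R -> V) (H : V -> W)
    (t : R) (dc : V) :
  is_derive t 1 c dc -> differentiable H (c t) ->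
  is_derive t 1 (H \o c) ('D_dc H (c t)).
Proof.
move=> [/derivable1_diffP cd <-] Hd.
have Hcd : differentiable (H \o c) t by apply: differentiable_comp.
apply: DeriveDef; first exact: diff_derivable.
by rewrite !deriveE // diff_comp.
Qed.

Lemma is_diff_snd_coord {V : normedModType R} {m n : nat} (i : 'I_m) (j : 'I_n)
    (z : V * 'M[R]_(m, n)) :
  is_diff z (fun z => z.2 i j) (fun v => v.2 i j).
Proof.
have lin : linear (fun z : V * 'M[R]_(m, n) => z.2 i j).
  by move=> a u w; rewrite /= !mxE.
pose L : {linear (V * 'M[R]_(m, n))%type -> R} :=
  HB.pack (fun z : V * 'M[R]_(m, n) => z.2 i j) (GRing.isLinear.Build _ _ _ _ _ lin).
have Lc : continuous L.
  by move=> w; apply: (@continuous_comp _ _ _ snd (fun N : 'M[R]_(m, n) => N i j));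
    [exact: cvg_snd|exact: coord_continuous].
apply: DiffDef; first exact: (linear_differentiable _ Lc).
exact: (diff_lin _ Lc).
Qed.

Lemma mx_normr_le m n (A : 'M[R]_(m, n)) (c : R) :
  0 <= c -> (forall i j, `|A i j| <= c) -> `|A| <= c.
Proof.
move=> c_ge0 Ac; rewrite [leLHS]/Num.Def.normr /= mx_normrE.
by apply: bigmax_le => // -[i j] _; apply: Ac.
Qed.

End calculus.

Section comparison.
Context {R : realType}.

Lemma last_ge0_before {h : R -> R} {t1 : R} :
  (forall s, 0 < s -> {for s, continuous h}) ->
  0 <= h 0 -> 0 <= t1 -> h t1 < 0 ->
  exists t0, [/\ 0 <= t0 < t1, 0 <= h t0 & forall s, t0 < s <= t1 -> h s < 0].
Proof.
move=> hc h0 t1_ge0 h_t1.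
pose S := [set s | 0 <= s <= t1 /\ 0 <= h s].
have S0 : S 0 by rewrite /S /= lexx t1_ge0.
have supS : has_sup S by split; [exists 0 | exists t1 => s [/andP[_ ?] _]].
pose t0 := sup S.
have t0_ge0 : 0 <= t0 by apply: sup_upper_bound.
have t0_le_t1 : t0 <= t1 by apply: ge_sup; [exists 0 | move=> s [/andP[_ ?] _]].
have h_t0 : 0 <= h t0.
  have [->//|t0_neq0] := eqVneq t0 0; rewrite leNgt; apply/negP => h_lt0.
  have /nbhs_ballP[e e0 He] : \forall s \near t0, h s < 0.
    by apply: (cvgr_lt _ (hc t0 _)) => //; rewrite lt_neqAle eq_sym t0_neq0.
  have [s Ss t0e_lt_s] := sup_adherent e0 supS.
  have s_le_t0 : s <= t0 by apply: sup_upper_bound.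
  suff /He : ball t0 e s by case: Ss => _ hs; rewrite ltNge hs.
  by rewrite /ball /= ger0_norm ?subr_ge0 // ltrBlDr addrC -ltrBlDr.
exists t0; split => //.
- rewrite t0_ge0 lt_neqAle t0_le_t1 andbT; apply/eqP => t0_eq_t1.
  by move: h_t1; rewrite -t0_eq_t1 ltNge h_t0.
- move=> s /andP[t0s st1]; rewrite ltNge; apply/negP => hs.
  have Ss : S s by split => //; rewrite st1 (le_trans t0_ge0) // ltW.
  by move: (sup_upper_bound supS Ss); rewrite leNgt t0s.
Qed.

Lemma comparison_ge0 {a h dh : R -> R} :
  a 0 = 0 -> {homo a : x y / x < y} ->
  {within `[0, +oo[, continuous h} ->
  (forall t : R, 0 < t -> is_derive t 1 h (dh t)) ->
  (forall t : R, 0 < t -> 0 <= dh t + a (h t)) ->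
  0 <= h 0 -> forall t, 0 <= t -> 0 <= h t.
Proof.
move=> a0 a_incr hc hd hineq h0 t1 t1_ge0; rewrite leNgt; apply/negP => h_t1.
have h_cont s : 0 < s -> {for s, continuous h}.
  by move=> /hd[/derivable1_diffP/differentiable_continuous].
have [t0 [/andP[t0_ge0 t0_lt_t1] h_t0 h_lt0]] :=
  last_ge0_before h_cont h0 t1_ge0 h_t1.
suff : h t0 <= h t1 by rewrite leNgt (lt_le_trans h_t1 h_t0).
apply: (@ger0_derive1_ndecr _ h t0 t1) => //; last 2 first.
- apply: (continuous_subspaceW _ hc) => s /=; rewrite !in_itv /= andbT.
  by move=> /andP[+ _]; apply: le_trans.
- exact: ltW.
- move=> s; rewrite in_itv /= => /andP[t0s _].
  by case: (hd s (le_lt_trans t0_ge0 t0s)).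
move=> s; rewrite in_itv /= => /andP[t0s st1].
have s_gt0 : 0 < s := le_lt_trans t0_ge0 t0s.
have /a_incr : h s < 0 by apply: h_lt0; rewrite t0s ltW.
rewrite a0 derive1E; have [_ ->] := hd s s_gt0.
by have := hineq s s_gt0; lra.
Qed.

Lemma bounded_derive_lipschitz {h dh : R -> R} {C : R} :
  {within `[0, +oo[, continuous h} ->
  (forall t : R, 0 < t -> is_derive t 1 h (dh t)) ->
  (forall t : R, 0 < t -> `|dh t| <= C) ->
  forall s t, 0 <= s -> 0 <= t -> `|h t - h s| <= C * `|t - s|.
Proof.
move=> hc hd hC s t.
wlog st : s t / s <= t.
  move=> Hwlog s_ge0 t_ge0; have [/Hwlog|/ltW/Hwlog] := leP s t; first exact.
  by rewrite distrC [`|t - s|]distrC => H; apply: H.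
move=> s_ge0 _; rewrite [`|t - s|]ger0_norm ?subr_ge0 //.
have [<-|s_neq_t] := eqVneq s t; first by rewrite !subrr normr0 mulr0.
have lt_st : s < t by rewrite lt_neqAle s_neq_t.
have [] := @MVT _ h dh s t lt_st.
- by move=> c; rewrite in_itv /= => /andP[sc _]; apply: hd; apply: le_lt_trans sc.
- apply: (continuous_subspaceW _ hc) => c /=; rewrite !in_itv /= andbT.
  by move=> /andP[+ _]; apply: le_trans.
move=> c; rewrite in_itv /= => /andP[sc _] ->.
rewrite normrM [`|t - s|]ger0_norm ?subr_ge0 //.
apply: ler_wpM2r; first by rewrite subr_ge0.
by apply: hC; apply: le_lt_trans sc.
Qed.

End comparison.

Section input_barriers.
Context {R : realType} {n q : nat}.
Implicit Types (umin umax : 'cV[R]_q) (z : 'cV[R]_n * 'cV[R]_q).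

Lemma is_diff_bmin umin k z : is_diff z (bmin umin k) (fun v => v.2 k ord0).
Proof.
have := is_diffB (is_diff_snd_coord k ord0 z) (is_diff_cst (umin k ord0) z).
by rewrite subr0.
Qed.

Lemma is_diff_bmax umax k z : is_diff z (bmax umax k) (fun v => - v.2 k ord0).
Proof.
have := is_diffB (is_diff_cst (umax k ord0) z) (is_diff_snd_coord k ord0 z).
by rewrite sub0r.
Qed.

Lemma differentiable_bmin umin k z : differentiable (bmin umin k) z.
Proof. by case: (is_diff_bmin umin k z). Qed.

Lemma differentiable_bmax umax k z : differentiable (bmax umax k) z.
Proof. by case: (is_diff_bmax umax k z). Qed.

Lemma derive_bmin umin k z v : 'D_v (bmin umin k) z = v.2 k ord0.
Proof. by case: (is_diff_bmin umin k z) => dz dval; rewrite deriveE // dval. Qed.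

Lemma derive_bmax umax k z v : 'D_v (bmax umax k) z = - v.2 k ord0.
Proof. by case: (is_diff_bmax umax k z) => dz dval; rewrite deriveE // dval. Qed.

Lemma norm_derive_bmin_le f g tau umin umax (amin amax : R -> R) k z w :
  classK amin -> classK amax -> in_box umin umax z.2 ->
  0 <= psi1f f g tau (bmin umin k) amin z w ->
  0 <= psi1f f g tau (bmax umax k) amax z w ->
  `|'D_(filt_field f g tau z w) (bmin umin k) z|
    <= amin (umax k ord0 - umin k ord0) + amax (umax k ord0 - umin k ord0).
Proof.
move=> [amin0 [_ /ltW_homo amin_le]] [amax0 [_ /ltW_homo amax_le]].
move=> /(_ k)/andP[lo hi]; rewrite /psi1f derive_bmin derive_bmax => psi_min psi_max.
set B := umax k ord0 - umin k ord0.
have B_ge0 : 0 <= B by rewrite subr_ge0 (le_trans lo).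
have aminB : 0 <= amin B by rewrite -amin0 amin_le.
have amaxB : 0 <= amax B by rewrite -amax0 amax_le.
have : amin (bmin umin k z) <= amin B by apply: amin_le; rewrite lerD2r.
have : amax (bmax umax k z) <= amax B by apply: amax_le; rewrite lerD2l lerN2.
by rewrite ler_norml; lra.
Qed.

End input_barriers.

Lemma psiS_input_free (R : realType) n q f g (b : 'cV[R]_n -> R) alpha i
    (y : 'cV[R]_n) (u : 'cV[R]_q) :
  (forall y' (u' u'' : 'cV[R]_q),
     psi f g b alpha i y' u' = psi f g b alpha i y' u'') ->
  psi f g b alpha i.+1 y u
    = 'D_(f y + g y *m u) (fun y' => psi f g b alpha i y' 0) y
      + alpha i.+1 (psi f g b alpha i y 0).
Proof.
move=> free /=; rewrite (free y u 0); congr ('D_ _ _ _ + _).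
by apply/funext => y'; apply: free.
Qed.

Section closed_loop.
Context {R : realType} {n q : nat} {f : 'cV[R]_n -> 'cV[R]_n}
  {g : 'cV[R]_n -> 'M[R]_(n, q)} {tau : R} {nu : 'cV[R]_n * 'cV[R]_q -> 'cV[R]_q}
  {x : R -> 'cV[R]_n} {uf : R -> 'cV[R]_q}.
Hypotheses (xc : {within `[0, +oo[, continuous x})
  (ufc : {within `[0, +oo[, continuous uf})
  (xd : forall t : R, 0 < t -> is_derive t 1 x (f (x t) + g (x t) *m uf t))
  (ufd : forall t : R, 0 < t ->
     is_derive t 1 uf (tau^-1 *: (nu (x t, uf t) - uf t))).

Let z t := (x t, uf t).

Let zc : {within `[0, +oo[, continuous z}.
Proof. exact: within_continuous_pair. Qed.

Let zd (t : R) : 0 < t -> is_derive t 1 z (filt_field f g tau (z t) (nu (z t))).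
Proof. by move=> t_gt0; apply: is_derive_pair; [exact: xd | exact: ufd]. Qed.

Lemma CBF_filt_invariant {h : 'cV[R]_n * 'cV[R]_q -> R} {a : R -> R} :
  classK a -> (forall z, differentiable h z) ->
  (forall t : R, 0 <= t -> 0 <= psi1f f g tau h a (z t) (nu (z t))) ->
  0 <= h (z 0) -> forall t : R, 0 <= t -> 0 <= h (z t).
Proof.
move=> [a0 [_ a_incr]] hd psi1_ge0 h0.
apply: (comparison_ge0 (h := h \o z) a0 a_incr) => //.
- exact: within_continuous_comp zc (fun w => differentiable_continuous (hd w)).
- by move=> t t_gt0; apply: is_derive_comp (zd _ t_gt0) (hd _).
- by move=> t t_gt0; apply: psi1_ge0 (ltW t_gt0).
Qed.

Section HOCBF.
Context {b : 'cV[R]_n -> R} {alpha : nat -> R -> R}.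

Lemma psi_ge0_of_succ i :
  classK (alpha i.+1) ->
  (forall y (u u' : 'cV[R]_q), psi f g b alpha i y u = psi f g b alpha i y u') ->
  (forall y, differentiable (fun y' => psi f g b alpha i y' 0) y) ->
  Cset f g b alpha i (x 0) ->
  (forall t : R, 0 <= t -> 0 <= psi f g b alpha i.+1 (x t) (uf t)) ->
  forall t : R, 0 <= t -> 0 <= psi f g b alpha i (x t) (uf t).
Proof.
move=> [a0 [_ a_incr]] free dpsi C0 psiS_ge0 t t_ge0; rewrite (free _ _ 0).
apply: (comparison_ge0 (h := (fun y => psi f g b alpha i y 0) \o x) a0 a_incr)
  => //.
- exact: within_continuous_comp xc (fun y => differentiable_continuous (dpsi y)).
- by move=> s s_gt0; apply: is_derive_comp (xd _ s_gt0) (dpsi _).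
- by move=> s s_gt0; rewrite /= -psiS_input_free //; apply: psiS_ge0 (ltW s_gt0).
Qed.

Lemma HOCBF_forward_invariant m :
  (forall i, (i < m)%N -> forall y (u u' : 'cV[R]_q),
     psi f g b alpha i y u = psi f g b alpha i y u') ->
  (forall i, (0 < i <= m)%N -> classK (alpha i)) ->
  (forall i, (i < m)%N ->
     forall y, differentiable (fun y' => psi f g b alpha i y' 0) y) ->
  (forall i, (i < m)%N -> Cset f g b alpha i (x 0)) ->
  (forall t : R, 0 <= t -> 0 <= psi f g b alpha m (x t) (uf t)) ->
  forall t : R, 0 <= t -> 0 <= b (x t).
Proof.
move=> free alphaK dpsi C0 psim_ge0.
suff psi_ge0 j : (j <= m)%N ->
    forall t : R, 0 <= t -> 0 <= psi f g b alpha (m - j) (x t) (uf t).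
  by move=> t; have := psi_ge0 m (leqnn m) t; rewrite subnn.
elim: j => [_|j IHj lt_jm]; first by rewrite subn0.
have mSj : (m - j = (m - j.+1).+1)%N by lia.
rewrite mSj in IHj.
apply: psi_ge0_of_succ.
- by apply: alphaK; lia.
- by apply: free; lia.
- by apply: dpsi; lia.
- by apply: C0; lia.
- by apply: IHj; lia.
Qed.

End HOCBF.

Section input_limits.
Context {umin umax : 'cV[R]_q} {amin amax : 'I_q -> R -> R}.
Hypotheses (aminK : forall k, classK (amin k)) (amaxK : forall k, classK (amax k))
  (psi1_min_ge0 : forall k (t : R), 0 <= t ->
     0 <= psi1f f g tau (bmin umin k) (amin k) (z t) (nu (z t)))
  (psi1_max_ge0 : forall k (t : R), 0 <= t ->
     0 <= psi1f f g tau (bmax umax k) (amax k) (z t) (nu (z t)))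
  (bmin0_ge0 : forall k, 0 <= bmin umin k (z 0))
  (bmax0_ge0 : forall k, 0 <= bmax umax k (z 0)).

Lemma filtered_input_in_box t : 0 <= t -> in_box umin umax (uf t).
Proof.
move=> t_ge0 k; apply/andP; split; rewrite -subr_ge0.
- exact: (CBF_filt_invariant (aminK k) (differentiable_bmin umin k) (psi1_min_ge0 k)).
- exact: (CBF_filt_invariant (amaxK k) (differentiable_bmax umax k) (psi1_max_ge0 k)).
Qed.

Lemma filtered_input_lipschitz :
  exists L : R, forall s t : R, 0 <= s -> 0 <= t -> `|uf t - uf s| <= L * `|t - s|.
Proof.
pose C k := amin k (umax k ord0 - umin k ord0) + amax k (umax k ord0 - umin k ord0).
pose rate k t := 'D_(filt_field f g tau (z t) (nu (z t))) (bmin umin k) (z t).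
have rate_le k t : 0 <= t -> `|rate k t| <= C k.
  move=> t_ge0; apply: norm_derive_bmin_le (aminK k) (amaxK k) _ _ _.
  - exact: filtered_input_in_box.
  - exact: psi1_min_ge0.
  - exact: psi1_max_ge0.
have C_ge0 k : 0 <= C k by apply: le_trans (rate_le k 0 (lexx 0)).
have entry_lip k s t : 0 <= s -> 0 <= t ->
    `|uf t k ord0 - uf s k ord0| <= C k * `|t - s|.
  have -> : uf t k ord0 - uf s k ord0 = (bmin umin k \o z) t - (bmin umin k \o z) s.
    by rewrite /= /bmin opprB addrA subrK.
  apply: (bounded_derive_lipschitz (dh := rate k)).
  - apply: within_continuous_comp zc _ => w.
    exact/differentiable_continuous/differentiable_bmin.
  - move=> r r_gt0.
    by apply: is_derive_comp (zd _ r_gt0) (differentiable_bmin umin k _).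
  - by move=> r r_gt0; apply: rate_le (ltW r_gt0).
exists (\sum_k C k) => s t s_ge0 t_ge0.
apply: mx_normr_le => [|i j]; first by rewrite mulr_ge0 ?sumr_ge0.
rewrite !mxE (ord1 j); apply: le_trans (entry_lip i s t s_ge0 t_ge0) _.
by apply: ler_wpM2r => //; rewrite (bigD1 i) //= lerDl sumr_ge0.
Qed.

End input_limits.

End closed_loop.

Theorem corollary2 (R : realType) (n q m : nat)
  (f : 'cV[R]_n -> 'cV[R]_n) (g : 'cV[R]_n -> 'M[R]_(n, q))
  (b : 'cV[R]_n -> R) (alpha : nat -> R -> R) (umin umax : 'cV[R]_q)
  (tau : R) (a_f : R -> R) (amin amax : 'I_q -> R -> R)
  (nu : 'cV[R]_n * 'cV[R]_q -> 'cV[R]_q)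
  (x : R -> 'cV[R]_n) (uf : R -> 'cV[R]_q) :
  (* standing assumptions *)
  loc_lipschitz f -> loc_lipschitz g ->
  (0 < m)%N ->
  rel_degree f g b alpha m ->
  is_HOCBF f g b alpha m umin umax ->
  (forall i, (i < m)%N -> forall (u : 'cV[R]_q) (y : 'cV[R]_n),
      differentiable (fun y' => psi f g b alpha i y' u) y) ->
  (forall z, differentiable (bf f g b alpha m) z) ->
  0 < tau ->
  (* closed-loop trajectory of the augmented system with input nu applied *)
  {within `[0, +oo[, continuous x} -> {within `[0, +oo[, continuous uf} ->
  (forall t : R, 0 < t -> is_derive t 1 x (f (x t) + g (x t) *m uf t)) ->
  (forall t : R, 0 < t -> is_derive t 1 uf (tau^-1 *: (nu (x t, uf t) - uf t))) ->
  (* (1) FCBF *)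
  lipschitz nu ->
  is_CBF_filt f g tau (bf f g b alpha m) a_f ->
  (forall i, (i < m)%N -> Cset f g b alpha i (x 0)) ->
  0 <= bf f g b alpha m (x 0, uf 0) ->
  (forall t : R, 0 <= t ->
     0 <= psi1f f g tau (bf f g b alpha m) a_f (x t, uf t) (nu (x t, uf t))) ->
  (* (2) input-limit HOCBFs *)
  (forall k, is_CBF_filt f g tau (bmin umin k) (amin k)) ->
  (forall k, is_CBF_filt f g tau (bmax umax k) (amax k)) ->
  (forall k, 0 <= bmin umin k (x 0, uf 0)) ->
  (forall k, 0 <= bmax umax k (x 0, uf 0)) ->
  (* (3) nu is a common solution of all conditions, applied at every time *)
  (forall k (t : R), 0 <= t ->
     0 <= psi1f f g tau (bmin umin k) (amin k) (x t, uf t) (nu (x t, uf t))) ->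
  (forall k (t : R), 0 <= t ->
     0 <= psi1f f g tau (bmax umax k) (amax k) (x t, uf t) (nu (x t, uf t))) ->
  (* conclusions *)
  (exists L : R, forall s t : R, 0 <= s -> 0 <= t -> `|uf t - uf s| <= L * `|t - s|) /\
  (forall t : R, 0 <= t -> 0 <= b (x t) /\ in_box umin umax (uf t)).
Proof.
(* The Lipschitz hypotheses, 0 < m, 0 < tau and the feasibility halves of the
   barrier definitions only serve the existence of the trajectory, which is
   given here. *)
move=> _ _ _ [psi_input_free _] [alphaK _] dpsi dbf _ xc ufc xd ufd _ [afK _] C0
  bf0 bf_cond minCBF maxCBF min0 max0 min_cond max_cond.
have aminK k := proj1 (minCBF k).
have amaxK k := proj1 (maxCBF k).
split.
  exact: (filtered_input_lipschitz xc ufc xd ufd aminK amaxK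
            min_cond max_cond min0 max0).
move=> t t_ge0; split; last first.
  exact: (filtered_input_in_box xc ufc xd ufd aminK amaxK
            min_cond max_cond min0 max0).
apply: (HOCBF_forward_invariant xc xd m psi_input_free alphaK _ C0 _ t t_ge0).
- by move=> i lt_im; apply: dpsi.
- exact: (CBF_filt_invariant xc ufc xd ufd afK dbf bf_cond bf0).
Qed.
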